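(* Assume $\phi$ is convex, $R_\phi$ is strictly convex, $\mathbf{w}_{\mathrm{sup}}$ is the minimizer of $R_\phi$, and $\mathbf{w}_{\mathrm{sup}}\in\mathcal{C}_\phi$. Then there exists $\mathbf{q}^\ast\in[0,1]^U$ such that for every $\mathbf{w}_{\mathrm{semi}}\in\mathbb{R}^d$ with $\mathbf{w}_{\mathrm{semi}}\neq\mathbf{w}_{\mathrm{sup}}$ we have $D_\phi(\mathbf{w}_{\mathrm{semi}},\mathbf{q}^\ast)>0$.
   Context: Fix integers $L,U,d\ge 1$. Let $\mathbf{X}\in\mathbb{R}^{L\times d}$ be a matrix whose rows $\mathbf{x}_1^\top,\dots,\mathbf{x}_L^\top$ are the labeled objects, with labels $\mathbf{y}\in\{-1,+1\}^L$. Let $\mathbf{X}_{\mathrm{u}}\in\mathbb{R}^{U\times d}$ be a matrix whose rows $\mathbf{x}_{\mathrm{u},1}^\top,\dots,\mathbf{x}_{\mathrm{u},U}^\top$ are the unlabeled objects. Let $\phi:\mathbb{R}\to\mathbb{R}$ be a loss function, $\Omega:\mathbb{R}^d\to\mathbb{R}$ a convex function and $\lambda\ge 0$. The supervised risk is $R_\phi(\mathbf{w})=\sum_{i=1}^L\phi(y_i\mathbf{x}_i^\top\mathbf{w})+\lambda\Omega(\mathbf{w})$. For responsibilities $\mathbf{q}\in[0,1]^U$ the semi-supervised risk is $R^{\mathrm{semi}}_\phi(\mathbf{w},\mathbf{q})=R_\phi(\mathbf{w})+\sum_{j=1}^U\big[q_j\phi(\mathbf{x}_{\mathrm{u},j}^\top\mathbf{w})+(1-q_j)\phi(-\mathbf{x}_{\mathrm{u},j}^\top\mathbf{w})\big]$.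 Given the minimizer $\mathbf{w}_{\mathrm{sup}}$ of $R_\phi$, define $D_\phi(\mathbf{w},\mathbf{q})=R^{\mathrm{semi}}_\phi(\mathbf{w},\mathbf{q})-R^{\mathrm{semi}}_\phi(\mathbf{w}_{\mathrm{sup}},\mathbf{q})$. The constraint set is $\mathcal{C}_\phi=\{\mathbf{w}\in\mathbb{R}^d:\ \exists\,\mathbf{q}\in[0,1]^U \text{ such that } \mathbf{w} \text{ minimizes } R^{\mathrm{semi}}_\phi(\cdot,\mathbf{q})\}$. *)

From mathcomp Require Import all_boot.
From Stdlib Require Import Reals.

Set Implicit Arguments.
Unset Strict Implicit.

Definition vec (d : nat) := 'I_d -> R.

Definition dot (d : nat) (x w : vec d) : R :=
  \big[Rplus/0%R]_(i < d) (x i * w i)%R.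

Definition convex_R (f : R -> R) : Prop :=
  forall (x y t : R), (0 <= t <= 1)%R ->
    (f (t * x + (1 - t) * y) <= t * f x + (1 - t) * f y)%R.

Definition vcomb (d : nat) (t : R) (x y : vec d) : vec d :=
  fun i => (t * x i + (1 - t) * y i)%R.

Definition convex_vec (d : nat) (F : vec d -> R) : Prop :=
  forall (x y : vec d) (t : R), (0 <= t <= 1)%R ->
    (F (vcomb t x y) <= t * F x + (1 - t) * F y)%R.

Definition strictly_convex_vec (d : nat) (F : vec d -> R) : Prop :=
  forall (x y : vec d) (t : R), x <> y -> (0 < t < 1)%R ->
    (F (vcomb t x y) < t * F x + (1 - t) * F y)%R.

Definition is_minimizer (d : nat) (F : vec d -> R) (w : vec d) : Prop :=
  forall v : vec d, (F w <= F v)%R.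

Definition Rsup (L d : nat) (phi : R -> R) (Omega : vec d -> R) (lam : R)
    (X : 'I_L -> vec d) (y : 'I_L -> R) (w : vec d) : R :=
  (\big[Rplus/0%R]_(i < L) phi (y i * dot (X i) w) + lam * Omega w)%R.

Definition Rsemi (L U d : nat) (phi : R -> R) (Omega : vec d -> R) (lam : R)
    (X : 'I_L -> vec d) (y : 'I_L -> R) (Xu : 'I_U -> vec d)
    (q : 'I_U -> R) (w : vec d) : R :=
  (Rsup phi Omega lam X y w +
   \big[Rplus/0%R]_(j < U)
      (q j * phi (dot (Xu j) w) + (1 - q j) * phi (- dot (Xu j) w)))%R.

Definition Dphi (L U d : nat) (phi : R -> R) (Omega : vec d -> R) (lam : R)
    (X : 'I_L -> vec d) (y : 'I_L -> R) (Xu : 'I_U -> vec d)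
    (wsup : vec d) (w : vec d) (q : 'I_U -> R) : R :=
  (Rsemi phi Omega lam X y Xu q w - Rsemi phi Omega lam X y Xu q wsup)%R.

Definition resp (U : nat) (q : 'I_U -> R) : Prop :=
  forall j, (0 <= q j <= 1)%R.

Definition in_Cphi (L U d : nat) (phi : R -> R) (Omega : vec d -> R) (lam : R)
    (X : 'I_L -> vec d) (y : 'I_L -> R) (Xu : 'I_U -> vec d) (w : vec d) : Prop :=
  exists q : 'I_U -> R, resp q /\ is_minimizer (Rsemi phi Omega lam X y Xu q) w.

(* Adding the convex unlabeled-data term to the strictly convex supervised
   risk keeps the semi-supervised risk strictly convex for every choice of
   responsibilities q.  Since w_sup lies in C_phi, it minimizes R^semi(., q)
   for some q, and a minimizer of a strictly convex function is its unique
   strict minimizer; that q is the required q*. *)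
From mathcomp Require Import all_boot.
From Stdlib Require Import Reals Lra.

Set Implicit Arguments.
Unset Strict Implicit.

Open Scope R_scope.

Lemma big_Rplus_le n (f g : 'I_n -> R) : (forall i, f i <= g i) ->
  \big[Rplus/0]_(i < n) f i <= \big[Rplus/0]_(i < n) g i.
Proof.
by move=> fg; apply: (big_ind2 (fun a b => a <= b)) => [|*|//]; lra.
Qed.

Lemma big_Rplus_lincomb n (f g : 'I_n -> R) a b :
  \big[Rplus/0]_(i < n) (a * f i + b * g i) =
  a * \big[Rplus/0]_(i < n) f i + b * \big[Rplus/0]_(i < n) g i.
Proof. by elim/big_rec3: _ => [|i x1 x2 x3 _ ->]; ring. Qed.

Lemma convex_R_opp (phi : R -> R) :
  convex_R phi -> convex_R (fun x => phi (- x)).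
Proof.
move=> cvx x z t t01.
have -> : - (t * x + (1 - t) * z) = t * - x + (1 - t) * - z by ring.
exact: cvx.
Qed.

Section ConvexVec.

Variable d : nat.
Implicit Types (F G : vec d -> R) (a v w : vec d).

Lemma dot_vcomb a t v w :
  dot a (vcomb t v w) = t * dot a v + (1 - t) * dot a w.
Proof. by rewrite /dot -big_Rplus_lincomb; apply: eq_bigr => i _; rewrite /vcomb; ring. Qed.

Lemma convex_vec_comp_dot (phi : R -> R) a :
  convex_R phi -> convex_vec (fun v => phi (dot a v)).
Proof. by move=> cvx v w t t01; rewrite dot_vcomb; apply: cvx. Qed.

Lemma convex_vec_scale c F :
  0 <= c -> convex_vec F -> convex_vec (fun v => c * F v).
Proof.
move=> c0 cvx v w t t01.
have := Rmult_le_compat_l c _ _ c0 (cvx v w t t01); lra.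
Qed.

Lemma convex_vec_add F G :
  convex_vec F -> convex_vec G -> convex_vec (fun v => F v + G v).
Proof. by move=> cF cG v w t t01; have := cF v w t t01; have := cG v w t t01; lra. Qed.

Lemma convex_vec_sum n (F : 'I_n -> vec d -> R) :
  (forall j, convex_vec (F j)) ->
  convex_vec (fun v => \big[Rplus/0]_(j < n) F j v).
Proof.
move=> cvx v w t t01; rewrite -big_Rplus_lincomb.
by apply: big_Rplus_le => j; apply: cvx.
Qed.

Lemma strictly_convex_vec_add F G :
  strictly_convex_vec F -> convex_vec G ->
  strictly_convex_vec (fun v => F v + G v).
Proof.
move=> sF cG v w t vw t01.
have := sF v w t vw t01; have := cG v w t ltac:(lra); lra.
Qed.

(* If F v <= F w, the midpoint of v and w would beat the minimizer w. *)
Lemma strictly_convex_minimizer_lt F w v :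
  strictly_convex_vec F -> is_minimizer F w -> v <> w -> F w < F v.
Proof.
move=> sF minw vw.
have := sF v w (/2) vw ltac:(lra); have := minw (vcomb (/2) v w); have := minw v.
lra.
Qed.

End ConvexVec.

Lemma Rsemi_strictly_convex (L U d : nat) (X : 'I_L -> vec d) (y : 'I_L -> R)
    (Xu : 'I_U -> vec d) (phi : R -> R) (Omega : vec d -> R) (lam : R)
    (q : 'I_U -> R) :
  resp q -> convex_R phi -> strictly_convex_vec (Rsup phi Omega lam X y) ->
  strictly_convex_vec (Rsemi phi Omega lam X y Xu q).
Proof.
move=> q01 cphi sRsup; apply: strictly_convex_vec_add => //.
apply: convex_vec_sum => j; have [q0 q1] := q01 j.
apply: convex_vec_add; apply: convex_vec_scale; try lra.
- exact: convex_vec_comp_dot.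
- exact: (convex_vec_comp_dot (Xu j) (convex_R_opp cphi)).
Qed.

Close Scope R_scope.

Theorem lemma1 (L U d : nat) (hL : (1 <= L)%N) (hU : (1 <= U)%N) (hd : (1 <= d)%N)
  (X : 'I_L -> vec d) (y : 'I_L -> R) (Xu : 'I_U -> vec d)
  (phi : R -> R) (Omega : vec d -> R) (lam : R) (wsup : vec d)
  (hy : forall i, y i = 1%R \/ y i = (-1)%R)
  (hOmega : convex_vec Omega)
  (hlam : (0 <= lam)%R)
  (hphi : convex_R phi)
  (hstrict : strictly_convex_vec (Rsup phi Omega lam X y))
  (hmin : is_minimizer (Rsup phi Omega lam X y) wsup)
  (hC : in_Cphi phi Omega lam X y Xu wsup) :
  exists qstar : 'I_U -> R, resp qstar /\
    forall wsemi : vec d, wsemi <> wsup ->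
      (0 < Dphi phi Omega lam X y Xu wsup wsemi qstar)%R.
Proof.
have [q [q01 minq]] := hC.
exists q; split => // w w_ne_wsup.
have sRsemi := Rsemi_strictly_convex Xu q01 hphi hstrict.
have := strictly_convex_minimizer_lt sRsemi minq w_ne_wsup.
by rewrite /Dphi; lra.
Qed.
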